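(* Consider an unweighted ESP instance on $G=(V,E)$, $|V|=n$, root $r$. For each $k\in\{1,\dots,n\}$ let $T_k$ be the tree returned by Garg's 2-approximation algorithm for the rooted $k$-MST problem (a subtree of $G$ containing $r$ with exactly $k$ vertices whose length $\ell(T_k)=\sum_{e\in E(T_k)}\ell_e$ is at most twice the minimum length of such a tree), where $T_1=(\{r\},\emptyset)$. Let $H$ be the directed graph with vertex set $\{1,\dots,n\}$, arcs $(i,j)$ for all $i<j$, and arc costs $c_{i,j}=(n-i)\,\ell(T_j)$. Let $P=(n_0,n_1,\dots,n_l)$ with $n_0=1$, $n_l=n$ be a shortest $(1,n)$-path in $H$, and let $\sigma_{\mathrm{Alg}}$ be the expanding search pattern built in $l$ phases, where in phase $j\in\{1,\dots,l\}$ the edges of $T_{n_j}$ having fewer than two endpoints in $\bigcup_{i=0}^{j-1}V(T_{n_i})$ are appended in an order such that the set of explored vertices stays connected (edges both of whose endpoints are already explored being skipped). Then $L(\sigma_{\mathrm{Alg}})\le z$, where $z$ is the cost of a shortest $(1,n)$-path in $H$.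
   Context: Unweighted ESP: connected undirected graph $G=(V,E)$, root $r\in V$, edge lengths $\ell_e\in\mathbb{Z}_{>0}$, all vertex weights $w_v=1$. An expanding search pattern is a sequence of edges $\sigma=(e_1,\dots,e_m)$ with $r\in e_1$ such that $\{e_1,\dots,e_i\}$ forms a tree in $G$ for every $i$. For $v\ne r$ visited by $\sigma$, $k_v=\min\{i:v\in e_i\}$, $k_r=0$, latency $L_v(\sigma)=\sum_{i=1}^{k_v}\ell_{e_i}$; total latency $L(\sigma)=\sum_{v\in V}L_v(\sigma)$. The cost of a path in $H$ is the sum of its arc costs. *)

From mathcomp Require Import all_boot.
Set Implicit Arguments. Unset Strict Implicit. Unset Printing Implicit Defensive.

(* Graph G = (V, E): V a finType (all of V is the vertex set), E a set of
   2-element vertex sets (simple undirected graph). Lengths ell : {set V} -> nat. *)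
Section ESP.
Variable V : finType.

Definition simple_graph (E : {set {set V}}) : Prop :=
  forall e, e \in E -> #|e| = 2.

Definition adj (F : {set {set V}}) : rel V := fun x y => [set x; y] \in F.

Definition connected_graph (E : {set {set V}}) : Prop :=
  forall x y : V, connect (adj E) x y.

Definition connected_on (S : {set V}) (F : {set {set V}}) : Prop :=
  forall x y, x \in S -> y \in S -> connect (adj F) x y.

Definition acyclic (F : {set {set V}}) : Prop :=
  forall c : seq V, uniq c -> 2 < size c -> ~~ cycle (adj F) c.

Definition is_tree (S : {set V}) (F : {set {set V}}) : Prop :=
  [/\ (forall e, e \in F -> e \subset S), S != set0, connected_on S F & acyclic F].

Definition rooted_ksubtree (E : {set {set V}}) (r : V) (k : nat)
  (S : {set V}) (F : {set {set V}}) : Prop :=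
  [/\ F \subset E, r \in S, #|S| = k & is_tree S F].

Definition tlen (ell : {set V} -> nat) (F : {set {set V}}) : nat :=
  \sum_(e in F) ell e.

Definition verts (s : seq {set V}) : {set V} := \bigcup_(e <- s) e.

Definition is_ESP (E : {set {set V}}) (r : V) (sigma : seq {set V}) : Prop :=
  [/\ all (fun e => e \in E) sigma,
      (sigma = [::] \/ r \in head set0 sigma) &
      (forall i, 1 <= i <= size sigma ->
         is_tree (verts (take i sigma)) [set e in take i sigma])].

Definition latency (ell : {set V} -> nat) (r : V) (sigma : seq {set V}) (v : V) : nat :=
  if v == r then 0
  else \sum_(e <- take (find (fun e : {set V} => v \in e) sigma).+1 sigma) ell e.

Definition total_latency (ell : {set V} -> nat) (r : V) (sigma : seq {set V}) : nat :=
  \sum_(v : V) latency ell r sigma v.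

Fixpoint proc (X : {set V}) (s : seq {set V}) : seq {set V} :=
  match s with
  | [::] => [::]
  | e :: s' => if e \subset X then proc X s' else e :: proc (X :|: e) s'
  end.

Fixpoint build (X : {set V}) (ss : seq (seq {set V})) : seq {set V} :=
  match ss with
  | [::] => [::]
  | s :: rest => let b := proc X s in b ++ build (X :|: verts b) rest
  end.

(* candidate edges of phase j+1 (0-based j): edges of T_{n_{j+1}} with fewer than
   two endpoints in V(T_{n_0}) u ... u V(T_{n_j}), where (n_0, n_1, ...) = 1 :: p *)
Definition cand (S : nat -> {set V}) (F : nat -> {set {set V}}) (p : seq nat) (j : nat)
  : {set {set V}} :=
  [set e in F (nth 0 p j) | ~~ (e \subset \bigcup_(i <- take j.+1 (1 :: p)) S i)].

End ESP.

(* The auxiliary digraph H on {1..n}: a (1,n)-path is 1 :: p with p strictly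
   increasing from 1 and ending at n; cost of arc (i,j) is (n - i) * c j. *)
Definition H_path (n : nat) (p : seq nat) : Prop := path ltn 1 p /\ last 1 p = n.

Definition H_cost (n : nat) (c : nat -> nat) (p : seq nat) : nat :=
  \sum_(ij <- zip (1 :: p) p) (n - ij.1) * c ij.2.

(* A vertex first reached in phase j has latency at most the total length of
   phases 1..j, so phase j is paid once by every vertex still unexplored when
   it starts.  Phase j appends only edges of T_(n_j), so its length is at most
   l(T_(n_j)); and all of T_(n_(j-1)) is explored before it starts (each vertex
   of that tree other than r has a tree edge at it, which was either appended
   or already explored), so at most n - n_(j-1) vertices pay for it.  This is
   exactly the arc cost c_(n_(j-1), n_j). *)

From mathcomp Require Import all_boot zify.
Set Implicit Arguments. Unset Strict Implicit. Unset Printing Implicit Defensive.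

Lemma mem_bigcup_seq (V : finType) (I : Type) (G : I -> {set V}) (s : seq I) v :
  (v \in \bigcup_(i <- s) G i) = has (fun i => v \in G i) s.
Proof.
elim: s => [|i s IHs]; first by rewrite big_nil in_set0.
by rewrite big_cons in_setU IHs.
Qed.

Lemma connect_adj_edge (V : finType) (F : {set {set V}}) x y :
  connect (adj F) x y -> x != y -> exists z, [set x; z] \in F.
Proof.
case/connectP=> [[|z q] /= Hq ->]; first by rewrite eqxx.
by case/andP: Hq => Hxz _ _; exists z.
Qed.

Lemma path_ltn_le_last (a : nat) (s : seq nat) :
  path ltn a s -> forall x, x \in a :: s -> x <= last a s.
Proof.
elim: s a => [|b s IHs] a /=; first by move=> _ x; rewrite inE => /eqP->.
case/andP=> ltab Hs x; rewrite inE => /predU1P[->|]; last exact: IHs.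
exact: leq_trans (ltnW ltab) (IHs _ Hs _ (mem_head _ _)).
Qed.

Lemma H_path_range n p x : H_path n p -> x \in 1 :: p -> 0 < x <= n.
Proof.
case=> Hp <- Hx; rewrite path_ltn_le_last // andbT.
case/predU1P: Hx => [-> //|Hx].
by have /allP/(_ _ Hx)/ltnW := order_path_min ltn_trans Hp.
Qed.

Lemma H_cost_nth n c p :
  H_cost n c p = \sum_(0 <= j < size p) (n - nth 0 (1 :: p) j) * c (nth 0 p j).
Proof.
rewrite /H_cost (big_nth (0, 0)) size_zip (minn_idPr (leqnSn _)).
apply: eq_big_nat => j /andP[_ lt_j].
by rewrite nth_zip_cond size_zip (minn_idPr (leqnSn _)) lt_j.
Qed.

Section Phases.
Variable V : finType.
Implicit Types (X : {set V}) (s : seq {set V}) (ss : seq (seq {set V})).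

Lemma verts_cons e s : verts (e :: s) = e :|: verts s.
Proof. by rewrite /verts big_cons. Qed.

Lemma proc_cover X s e : e \in s -> e \subset X :|: verts (proc X s).
Proof.
elim: s X => [|e' s IHs] X //=; rewrite inE => /predU1P[->|He].
  case: ifP => [HX|_]; first exact: subset_trans HX (subsetUl _ _).
  by rewrite verts_cons setUA (subset_trans (subsetUr X e')) ?subsetUl.
case: ifP => _; first exact: IHs.
by rewrite verts_cons setUA; apply: IHs.
Qed.

Fixpoint explored X ss j : {set V} :=
  if j is j'.+1 then
    let Y := explored X ss j' in Y :|: verts (proc Y (nth [::] ss j'))
  else X.

Definition phase X ss j := proc (explored X ss j) (nth [::] ss j).

Lemma exploredS X ss j : explored X ss j.+1 = explored X ss j :|: verts (phase X ss j).
Proof. by []. Qed.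

Lemma explored_cons X s ss j :
  explored X (s :: ss) j.+1 = explored (X :|: verts (proc X s)) ss j.
Proof. by elim: j => [|j IHj] //; rewrite exploredS /phase IHj. Qed.

Lemma phase_cons X s ss j :
  phase X (s :: ss) j.+1 = phase (X :|: verts (proc X s)) ss j.
Proof. by rewrite /phase explored_cons. Qed.

Lemma sub_explored X ss j : X \subset explored X ss j.
Proof. by elim: j => [|j IHj] //; rewrite exploredS (subset_trans IHj) ?subsetUl. Qed.

Lemma explored_mono X ss j : explored X ss j \subset explored X ss j.+1.
Proof. exact: subsetUl. Qed.

Lemma phase_cover X ss j e :
  e \in nth [::] ss j -> e \subset explored X ss j.+1.
Proof. exact: proc_cover. Qed.

Variable ell : {set V} -> nat.

Definition len s := \sum_(e <- s) ell e.

Lemma len_proc X s : len (proc X s) <= len s.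
Proof.
rewrite /len; elim: s X => [|e s IHs] X //=; rewrite big_cons.
by case: ifP => _; rewrite ?big_cons ?leq_add2l // (leq_trans (IHs X)) ?leq_addl.
Qed.

Lemma len_take n s : len (take n s) <= len s.
Proof. by rewrite /len -{2}(cat_take_drop n s) big_cat leq_addr. Qed.

Lemma latency_build ss X v : v \notin X ->
  \sum_(e <- take (find (fun e : {set V} => v \in e) (build X ss)).+1 (build X ss)) ell e
  <= \sum_(0 <= j < size ss) (v \notin explored X ss j) * len (phase X ss j).
Proof.
elim: ss X => [|s ss IHss] X vX; first by rewrite big_nil.
rewrite big_nat_recl // vX mul1n.
under [in X in _ <= X]eq_bigr do rewrite explored_cons phase_cons.
have -> : build X (s :: ss) = proc X s ++ build (X :|: verts (proc X s)) ss by [].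
rewrite find_cat; set b := proc X s; case: ifP => [hit|miss].
  by rewrite takel_cat -?has_find // (leq_trans (len_take _ _)) ?leq_addr.
rewrite take_cat ifF; last by rewrite ltnNge ltnW // ltnS leq_addr.
rewrite -addnS addKn big_cat leq_add2l.
apply: IHss; rewrite in_setU negb_or vX /verts mem_bigcup_seq.
by apply: contraFN miss; rewrite has_find.
Qed.

Lemma total_latency_build r ss :
  total_latency ell r (build [set r] ss) <=
  \sum_(0 <= j < size ss) #|~: explored [set r] ss j| * len (phase [set r] ss j).
Proof.
pose d j v := (v \notin explored [set r] ss j) * len (phase [set r] ss j).
apply: (@leq_trans (\sum_v \sum_(0 <= j < size ss) d j v)).
  apply: leq_sum => v _; rewrite /latency; case: eqP => [//|/eqP vr].
  by apply: latency_build; rewrite in_set1.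
rewrite exchange_big; apply: leq_sum => j _.
rewrite -sum1_card big_distrl [X in _ <= X]big_mkcond; apply: leq_sum => v _.
by rewrite /d in_setC; case: (_ \notin _).
Qed.

End Phases.

Section PathPhases.
Variables (V : finType) (E : {set {set V}}) (ell : {set V} -> nat) (r : V).
Variables (TS : nat -> {set V}) (F : nat -> {set {set V}}).
Variables (p : seq nat) (ss : seq (seq {set V})).
Hypothesis trees : forall k, 1 <= k <= #|V| -> rooted_ksubtree E r k (TS k) (F k).
Hypothesis TS1 : TS 1 = [set r].
Hypothesis Hp : H_path #|V| p.
Hypothesis phase_perm :
  forall j, j < size p -> perm_eq (nth [::] ss j) (enum (cand TS F p j)).

Let visited j := \bigcup_(i <- take j.+1 (1 :: p)) TS i.

Lemma visited_explored j : j <= size p -> visited j \subset explored [set r] ss j.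
Proof.
elim: j => [|j IHj] lt_j; first by rewrite /visited /= take0 big_seq1 TS1.
have IHj' := IHj (ltnW lt_j).
rewrite /visited (take_nth 0) // big_rcons /= -/(visited j) subUset.
rewrite (subset_trans IHj') ?explored_mono //=; apply/subsetP => v Sv.
have /trees[_ rS _ [_ _ Sconn _]] : 1 <= nth 0 p j <= #|V|.
  by apply: H_path_range Hp _; rewrite inE mem_nth ?orbT.
have [->|vr] := eqVneq v r.
  exact: subsetP (sub_explored [set r] ss j.+1) r (set11 r).
have [y vyF] := connect_adj_edge (Sconn _ _ Sv rS) vr.
have [vy_old|vy_new] := boolP ([set v; y] \subset visited j).
  have v_old : v \in visited j := subsetP vy_old _ (set21 v y).
  exact: subsetP (explored_mono _ _ _) _ (subsetP IHj' _ v_old).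
have : [set v; y] \in nth [::] ss j.
  by rewrite (perm_mem (phase_perm lt_j)) mem_enum inE vyF vy_new.
by move/(phase_cover [set r])/subsetP; apply; rewrite set21.
Qed.

Lemma card_unexplored j : j < size p ->
  #|~: explored [set r] ss j| <= #|V| - nth 0 (1 :: p) j.
Proof.
move=> lt_j; set k := nth 0 (1 :: p) j.
have /trees[_ _ card_k _] : 1 <= k <= #|V|.
  by apply: H_path_range Hp _; apply: mem_nth; apply: ltnW.
have k_visited : TS k \subset visited j.
  apply/subsetP => v Sv; rewrite mem_bigcup_seq; apply/hasP; exists k => //.
  by rewrite (take_nth 0) ?mem_rcons; [exact: mem_head | exact: ltnW].
have := subset_leq_card (subset_trans k_visited (visited_explored (ltnW lt_j))).
have := cardsC (explored [set r] ss j); lia.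
Qed.

Lemma len_phase j : j < size p -> len ell (phase [set r] ss j) <= tlen ell (F (nth 0 p j)).
Proof.
move=> lt_j; apply: leq_trans (len_proc _ _ _) _.
rewrite /len /tlen (perm_big _ (phase_perm lt_j)) big_enum /=.
apply: (sub_le_big leqnn (fun m n => leq_addr n m)) => e.
by rewrite inE => /andP[].
Qed.

End PathPhases.

Theorem lemma2 (V : finType) (E : {set {set V}}) (ell : {set V} -> nat) (r : V)
  (TS : nat -> {set V}) (F : nat -> {set {set V}})
  (p : seq nat) (ss : seq (seq {set V})) (sigma : seq {set V}) :
  simple_graph E ->
  (forall e, e \in E -> 0 < ell e) ->
  connected_graph E ->
  (* T_k = (S k, F k): rooted k-subtrees, 2-approximate (Garg's output) *)
  (forall k, 1 <= k <= #|V| -> rooted_ksubtree E r k (TS k) (F k)) ->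
  (forall k, 1 <= k <= #|V| -> forall S' F', rooted_ksubtree E r k S' F' ->
     tlen ell (F k) <= 2 * tlen ell F') ->
  TS 1 = [set r] -> F 1 = set0 ->
  (* 1 :: p is a shortest (1,n)-path in H *)
  H_path #|V| p ->
  (forall q, H_path #|V| q ->
     H_cost #|V| (fun k => tlen ell (F k)) p <= H_cost #|V| (fun k => tlen ell (F k)) q) ->
  (* sigma is built in phases from orderings ss of the candidate edge sets *)
  size ss = size p ->
  (forall j, j < size p -> perm_eq (nth [::] ss j) (enum (cand TS F p j))) ->
  sigma = build [set r] ss ->
  is_ESP E r sigma ->
  total_latency ell r sigma <= H_cost #|V| (fun k => tlen ell (F k)) p.
Proof.
move=> _ _ _ trees _ TS1 _ Hp _ size_ss phase_perm -> _.
apply: leq_trans (total_latency_build ell r ss) _.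
rewrite H_cost_nth size_ss !big_mkord; apply: leq_sum => j _.
apply: leq_mul.
  exact: (card_unexplored trees TS1 Hp phase_perm (ltn_ord j)).
exact: (len_phase ell r phase_perm (ltn_ord j)).
Qed.
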